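(* Let $G$ be a clique tree in which every block is a clique on at least $3$ vertices. Let $v$ be a cut vertex of $G$ and let $K_m$ ($m\ge 3$) be a pendant block of $G$ containing $v$. Let $G_1$ be the subgraph of $G$ induced by $V(G)\setminus (V(K_m)\setminus\{v\})$, so that $G=G_1\oplus_v K_m$. Then $$Z(G)=Z(G_1\oplus_v K_m)=Z(G_1)+Z(K_m)-1 = Z(G_1)+m-2.$$
   Context: All graphs are finite, simple and connected. A cut vertex of $G$ is a vertex $v$ with $G-v$ disconnected. A block is a maximal connected subgraph without a cut vertex of its own. A clique tree is a connected graph each of whose blocks is a complete graph (clique). A pendant block is a block containing exactly one cut vertex of $G$. If $G-v$ consists of two disjoint parts $W_1,W_2$ and $G_i$ is the subgraph induced by $\{v\}\cup V(W_i)$, then $G$ is the vertex-sum $G_1\oplus_v G_2$. Zero forcing: each vertex is coloured blue or white; the colour-change rule says that if a blue vertex $u$ has exactly one white neighbour $w$, then $w$ becomes blue. A set $S\subseteq V(G)$ is a zero forcing set if colouring $S$ blue and the rest white, repeated application of the rule turns all vertices blue. $Z(G)$, the zero forcing number, is the minimum size of a zero forcing set; in particular $Z(K_m)=m-1$. *)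

(* A simple graph is a symmetric irreflexive relation e on a
   finType T; a graph G is given by a vertex set V : {set T} together with e,
   and the subgraph induced by S is (e, S). *)
From mathcomp Require Import all_boot.
Set Implicit Arguments. Unset Strict Implicit. Unset Printing Implicit Defensive.

Section Graphs.
Variable T : finType.
Variable e : rel T.

Definition rel_on (S : {set T}) : rel T :=
  fun x y => [&& x \in S, y \in S & e x y].

Definition connected_on (S : {set T}) : bool :=
  (S != set0) && [forall x in S, forall y in S, connect (rel_on S) x y].

Definition disconnected_on (S : {set T}) : bool :=
  [exists x in S, exists y in S, ~~ connect (rel_on S) x y].

Definition cut_vertex (V : {set T}) (v : T) : bool :=
  (v \in V) && disconnected_on (V :\ v).

Definition nonsep (S : {set T}) : bool :=
  connected_on S && [forall x, ~~ cut_vertex S x].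

Definition block (V B : {set T}) : bool :=
  [&& B \subset V, nonsep B &
      [forall B' : {set T}, ((B \proper B') && (B' \subset V)) ==> ~~ nonsep B']].

Definition is_clique (B : {set T}) : bool :=
  [forall x in B, forall y in B, (x != y) ==> e x y].

Definition clique_tree (V : {set T}) : bool :=
  connected_on V && [forall B : {set T}, block V B ==> is_clique B].

Definition pendant_block (V B : {set T}) : bool :=
  block V B && (#|[set x in B | cut_vertex V x]| == 1).

(* one application of the colour-change rule in the graph induced by S:
   the blue set X becomes Y = w |: X, where blue u has w as unique white nbr *)
Definition force (S : {set T}) : rel {set T} :=
  fun X Y => [exists u in X, exists w,
    (u \in S) && ([set y in S :\: X | e u y] == [set w]) && (Y == w |: X)].

Definition zero_forcing (S X : {set T}) : bool :=
  (X \subset S) && connect (force S) X S.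

Definition zf_size (S : {set T}) : pred nat :=
  fun n => [exists X : {set T}, (#|X| == n) && zero_forcing S X].

Lemma zf_size_ex (S : {set T}) : exists n, zf_size S n.
Proof.
exists #|S|; apply/existsP; exists S.
by rewrite eqxx /zero_forcing subxx connect0.
Qed.

Definition Z (S : {set T}) : nat := ex_minn (zf_size_ex S).

End Graphs.

From mathcomp Require Import all_boot zify.
Set Implicit Arguments. Unset Strict Implicit. Unset Printing Implicit Defensive.

(* Let [B] be a pendant block of a clique tree [V], with cut vertex [v], put
   [W = B \ v] and [V1 = V \ W], so that [V] is the vertex sum of [V1] and the
   clique [B] at [v].  The proof has three parts.
   - Zero forcing in general: [Z] is the least size of a zero forcing set, and
     a zero forcing set leaves at most one vertex of a clique white when all
     neighbours of those vertices stay in the clique ([clique_white_le1]);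
     in particular [Z(K_m) = m - 1] ([Z_clique]).
   - Block structure: in a graph whose blocks are cliques, a vertex of a
     pendant block other than its cut vertex has all its neighbours in the
     block ([pendant_block_closed]); an outside neighbour would lie on a cycle
     through the block, and cycles are nonseparable.
   - Vertex sum with a clique attached at [v] ([Z_vertex_sum_clique]):
     projecting forcing processes from [V] to [V1] gives
     [Z(V1) + |B| - 2 <= Z(V)], and lifting processes from [V1] to [V],
     starting with all of [W] but one vertex blue, gives the converse. *)

Lemma connect_invariant (A : finType) (r : rel A) (I : pred A) x y :
  connect r x y -> I x -> (forall a b, I a -> r a b -> I b) -> I y.
Proof.
move=> /connectP [p + ->] + stepI; elim: p x => [|b p IH] a //= /andP [rab pb] Ia.
exact: IH pb (stepI a b Ia rab).
Qed.

Lemma connect_transport (A A' : finType) (r : rel A) (r' : rel A')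
    (f : A -> A') (I : pred A) x y :
  connect r x y -> I x ->
  (forall a b, I a -> r a b -> I b /\ connect r' (f a) (f b)) ->
  connect r' (f x) (f y).
Proof.
move=> /connectP [p + ->] + stepI; elim: p x => [|b p IH] a //= /andP [rab pb] Ia.
have [Ib fab] := stepI a b Ia rab.
exact: connect_trans fab (IH b pb Ib).
Qed.

Section ZeroForcing.
Variables (T : finType) (e : rel T).

Lemma forceP (S X : {set T}) u w :
  u \in X -> u \in S -> w \in S -> w \notin X -> e u w ->
  (forall y, y \in S -> y \notin X -> e u y -> y = w) ->
  force e S X (w |: X).
Proof.
move=> uX uS wS wX euw only_w; apply/existsP; exists u; rewrite uX.
apply/existsP; exists w; rewrite uS eqxx andbT /=.
apply/eqP/setP=> y; rewrite !inE; apply/idP/eqP => [/andP [/andP [yX yS] euy]|->].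
  exact: only_w.
by rewrite wX wS euw.
Qed.

Lemma forceE (S X Y : {set T}) : force e S X Y ->
  exists u w, [/\ u \in X, u \in S, w \in S, w \notin X &
    [/\ e u w, forall y, y \in S -> y \notin X -> e u y -> y = w & Y = w |: X]].
Proof.
case/existsP=> u /andP [uX] /existsP [w] /andP [/andP [uS /eqP whites] /eqP ->].
have /[!inE] /andP [/andP [wX wS] euw] : w \in [set y in S :\: X | e u y].
  by rewrite whites set11.
exists u, w; split=> //; split=> // y yS yX euy.
have : y \in [set y in S :\: X | e u y] by rewrite !inE yX yS euy.
by rewrite whites inE => /eqP.
Qed.

Lemma Z_le (S X : {set T}) : zero_forcing e S X -> Z e S <= #|X|.
Proof.
move=> zfX; rewrite /Z; case: ex_minnP => n _; apply.
by apply/existsP; exists X; rewrite eqxx.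
Qed.

Lemma Z_witness (S : {set T}) :
  exists X : {set T}, #|X| = Z e S /\ zero_forcing e S X.
Proof. by rewrite /Z; case: ex_minnP => n /existsP [X /andP [/eqP <- zfX]] _; exists X. Qed.

Lemma clique_adj (D : {set T}) x y :
  is_clique e D -> x \in D -> y \in D -> x != y -> e x y.
Proof.
by move=> /forallP/(_ x)/implyP cliqD /cliqD/forallP/(_ y)/implyP adj /adj/implyP.
Qed.

(* A vertex of
   [D] with two white neighbours in [C] can force nothing, so no vertex of
   [C] turns blue while two are white; hence a zero forcing set of [S] misses
   at most one vertex of [C]. *)
Lemma clique_white_le1 (S C D X : {set T}) :
  is_clique e D -> C \subset D -> C \subset S ->
  (forall u w, u \in S -> w \in C -> e u w -> u \in D) ->
  zero_forcing e S X -> #|C :\: X| <= 1.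
Proof.
move=> cliqD CD CS nbrC /andP [_ XS]; rewrite leqNgt; apply/negP => two_white.
have /eqP C_S : C :\: S == set0 by rewrite setD_eq0.
suff : 1 < #|C :\: S| by rewrite C_S cards0.
apply: (connect_invariant (I := fun Y => 1 < #|C :\: Y|) XS two_white).
move=> a b two_white_a.
case/forceE=> u [w [ua uS wS wa [euw only_w ->]]].
have [wC|wC] := boolP (w \in C); last first.
  suff -> : C :\: (w |: a) = C :\: a by [].
  by apply/setP=> y; rewrite !inE; case: (y =P w) => [->|]; rewrite ?(negPf wC) ?andbF.
(* [u] forces [w \in C], so [u \in D] and all of [C :\: a] is adjacent to [u] *)
have uD : u \in D by apply: nbrC uS wC euw.
have : C :\: a \subset [set w].
  apply/subsetP=> y /[!inE] /andP [ya yC]; apply/eqP/only_w => //.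
    exact: (subsetP CS).
  apply: clique_adj cliqD uD (subsetP CD y yC) _.
  by apply: contraNneq ya => <-.
by move/subset_leq_card; rewrite cards1 leqNgt two_white_a.
Qed.

Lemma Z_clique (C : {set T}) :
  is_clique e C -> 1 < #|C| -> Z e C = #|C|.-1.
Proof.
move=> cliqC C2; apply/eqP; rewrite eqn_leq; apply/andP; split.
  have [w [b [wC bC bw]]] : exists w b, [/\ w \in C, b \in C & b != w].
    have [w wC] : {w | w \in C} by apply/sigW/set0Pn; rewrite -card_gt0 ltnW.
    have /set0Pn [b /[!inE] /andP [bw bC]] : C :\ w != set0.
      by rewrite -card_gt0 (cardsD1 w C) wC in C2 *.
    by exists w, b.
  (* [C :\ w] is a zero forcing set: [b] forces [w] *)
  rewrite (cardsD1 w C) wC /=; apply: Z_le; rewrite /zero_forcing subD1set /=.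
  apply: connect1; rewrite -[X in force _ _ _ X](setD1K wC).
  apply: (forceP (u := b)) => //.
  - by rewrite !inE bw.
  - by rewrite !inE eqxx.
  - exact: clique_adj cliqC bC wC bw.
  - by move=> y yC; rewrite !inE yC andbT negbK => /eqP.
have [X [<- zfX]] := Z_witness C.
have := clique_white_le1 cliqC (subxx C) (subxx C) (fun u _ uC _ _ => uC) zfX.
case/andP: zfX => XC _; rewrite -(cardsID X C) (setIidPr XC); lia.
Qed.

End ZeroForcing.

Section Blocks.
Variables (T : finType) (e : rel T).
Hypotheses (esym : symmetric e) (eirr : irreflexive e).

Lemma connect_rel_on_sym (S : {set T}) x y :
  connect (rel_on e S) x y = connect (rel_on e S) y x.
Proof. by apply: sym_connect_sym => a b; rewrite /rel_on esym andbCA. Qed.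

Lemma path_connected (S : {set T}) h t :
  path e h t -> {subset h :: t <= S} ->
  {in h :: t &, forall x z, connect (rel_on e S) x z}.
Proof.
move=> pt htS; have pt_S : path (rel_on e S) h t.
  apply: (sub_in_path (P := mem S)) pt; last by apply/allP.
  by move=> x z xS zS exz; rewrite /rel_on xS zS exz.
move=> x z xP zP; apply: (connect_trans _ (path_connect pt_S zP)).
by rewrite connect_rel_on_sym (path_connect pt_S xP).
Qed.

Lemma star_connected (S : {set T}) h :
  h \in S -> (forall x, x \in S -> x != h -> e x h) ->
  {in S &, forall x z, connect (rel_on e S) x z}.
Proof.
move=> hS adj_h; suff to_h x : x \in S -> connect (rel_on e S) x h.
  by move=> x z xS zS; apply: (connect_trans (to_h x xS)); rewrite connect_rel_on_sym to_h.
move=> xS; have [->|xh] := eqVneq x h; first exact: connect0.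
by apply: connect1; rewrite /rel_on xS hS adj_h.
Qed.

Lemma nonsepI (S : {set T}) :
  S != set0 -> {in S &, forall x z, connect (rel_on e S) x z} ->
  (forall y, y \in S -> {in S :\ y &, forall x z, connect (rel_on e (S :\ y)) x z}) ->
  nonsep e S.
Proof.
move=> S0 connS connSy; rewrite /nonsep /connected_on S0 /=; apply/andP; split.
  apply/forallP=> x; apply/implyP=> xS.
  by apply/forallP=> z; apply/implyP=> zS; apply: connS.
apply/forallP=> y; rewrite /cut_vertex; apply/nandP.
have [yS|] := boolP (y \in S); [right|by left].
by apply/existsP=> -[x /andP [xS /exists_inP [z zS]]]; rewrite connSy.
Qed.

(* The vertex set of a cycle is nonseparable: deleting a vertex leaves a
   path through all remaining vertices. *)
Lemma cycle_nonsep (c : seq T) :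
  c != [::] -> uniq c -> cycle e c -> nonsep e [set x in c].
Proof.
case: c => // h t _ c_uniq c_cycle.
have path_ht : path e h t by move: c_cycle; rewrite /= rcons_path => /andP [].
apply: nonsepI.
- by apply/set0Pn; exists h; rewrite inE mem_head.
- by move=> x z /[!inE]; apply: path_connected => // x' /[!inE].
move=> z; rewrite in_set => z_c; case: (rot_to z_c) => i [|h' t'] c_rot.
  by move=> x x'; rewrite in_setD1 in_set -(mem_rot i) c_rot mem_seq1 andNb.
have c'_uniq : uniq [:: z, h' & t'] by rewrite -c_rot rot_uniq.
have path_ht' : path e h' t'.
  by move: c_cycle; rewrite -(rot_cycle i) c_rot /= rcons_path => /and3P [].
have del_z x : (x \in [set x in h :: t] :\ z) = (x \in h' :: t').
  rewrite in_setD1 in_set -(mem_rot i) c_rot in_cons.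
  by case: eqP => [->|] //=; move: c'_uniq => /= /andP [/negPf ->].
move=> x x' /[!del_z] xP x'P; apply: path_connected path_ht' _ _ _ xP x'P.
by move=> w; rewrite del_z.
Qed.

Lemma clique_add_nonsep (B : {set T}) u b y :
  is_clique e B -> u \in B -> b \in B -> u != b ->
  y \notin B -> e y u -> e y b -> nonsep e (y |: B).
Proof.
move=> cliqB uB bB ub yB eyu eyb; apply: nonsepI.
- by apply/set0Pn; exists y; rewrite setU11.
- apply: (star_connected (h := u)); first by rewrite setU1r.
  move=> x /setU1P [-> //|xB xu]; exact: clique_adj cliqB xB uB xu.
move=> z _.
have [c [cB cz eyc]] : exists c, [/\ c \in B, c != z & e y c].
  by have [uz|] := eqVneq u z; [exists b; rewrite -uz eq_sym | exists u].
apply: (star_connected (h := c)); first by rewrite !inE cz cB orbT.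
move=> x /setD1P [_ /setU1P [-> //|xB xc]]; exact: clique_adj cliqB xB cB xc.
Qed.

Lemma block_exists (V C : {set T}) :
  C \subset V -> nonsep e C -> exists2 B, block e V B & C \subset B.
Proof.
move=> CV nsC; pose P (B : {set T}) := [&& C \subset B, B \subset V & nonsep e B].
have PC : P C by rewrite /P subxx CV nsC.
have [B /and3P [CB BV nsB] B_max] := arg_maxnP (fun B : {set T} => #|B|) PC.
exists B => //; rewrite /block BV nsB /=.
apply/forallP=> B'; apply/implyP=> /andP [ltBB' B'V]; apply/negP=> nsB'.
have : #|B'| <= #|B|.
  by apply: B_max; rewrite /P B'V nsB' (subset_trans CB (proper_sub ltBB')).
by rewrite leqNgt proper_card.
Qed.

Lemma path_rel_on_sub (S : {set T}) x p : path (rel_on e S) x p -> {subset p <= S}.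
Proof.
elim: p x => [|a p IH] x //= /andP [/and3P [_ aS _] /IH pS] z.
by rewrite in_cons => /predU1P [->|/pS].
Qed.

(* If [u] is not a cut vertex, an edge [uy] and a neighbour [b] of [u] lie on
   a common cycle: close up a shortest path from [y] to [b] avoiding [u]. *)
Lemma noncut_cycle (V : {set T}) u y b :
  u \in V -> ~~ cut_vertex e V u -> y \in V -> b \in V :\ u -> e u y -> e b u ->
  exists c : seq T,
    [/\ uniq (u :: c), cycle e (u :: c), y \in c, b \in c & {subset c <= V}].
Proof.
move=> uV noncut yV bVu euy ebu.
have yVu : y \in V :\ u by rewrite !inE yV andbT; apply: contraTneq euy => ->; rewrite eirr.
have : connect (rel_on e (V :\ u)) y b.
  move: noncut; rewrite /cut_vertex uV /= => /existsPn/(_ y).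
  by rewrite yVu => /exists_inPn/(_ b bVu)/negbNE.
case/connectP=> p path_p b_last; move: ebu; rewrite b_last.
case/shortenP: path_p => p' path_p' yp'_uniq _ e_last_u.
have p'_Vu := path_rel_on_sub path_p'.
exists (y :: p'); split.
- rewrite cons_uniq yp'_uniq andbT in_cons negb_or eq_sym.
  rewrite (setD1P yVu).1 /=; by apply/negP=> /p'_Vu; rewrite !inE eqxx.
- rewrite /= rcons_path euy /= e_last_u andbT.
  by apply: sub_path path_p' => a a' /and3P [].
- exact: mem_head.
- exact: mem_last.
- by move=> x /predU1P [->|/p'_Vu /setD1P []].
Qed.

(* In a graph whose blocks are cliques, a vertex [u] of a block [B] that is
   not a cut vertex has all its neighbours in [B]: an outside neighbour [y]
   would lie on a cycle with [u] and another vertex [b] of [B], hence in a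
   common clique block, so [y |: B] would be a larger nonseparable set. *)
Lemma noncut_nbr_in_block (V B : {set T}) u b y :
  (forall B', block e V B' -> is_clique e B') -> block e V B ->
  u \in B -> b \in B -> u != b -> ~~ cut_vertex e V u ->
  y \in V -> e u y -> y \in B.
Proof.
move=> blocks_cliques blockB uB bB ub noncut yV euy.
have /and3P [BV _ B_max] := blockB.
have cliqB := blocks_cliques B blockB.
apply/negPn/negP=> yB.
have bVu : b \in V :\ u by rewrite !inE eq_sym ub (subsetP BV).
have ebu : e b u by apply: clique_adj cliqB bB uB _; rewrite eq_sym.
have [c [c_uniq c_cycle yc bc cV]] :=
  noncut_cycle (subsetP BV u uB) noncut yV bVu euy ebu.
have ucV : [set x in u :: c] \subset V.
  by apply/subsetP=> x /[!inE] /predU1P [->|/cV //]; apply: (subsetP BV).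
have ns_c := cycle_nonsep (isT : u :: c != [::]) c_uniq c_cycle.
have [B' blockB' ucB'] := block_exists ucV ns_c.
have in_B' x : x \in c -> x \in B'.
  by move=> xc; apply: (subsetP ucB'); rewrite inE in_cons xc orbT.
have eyb : e y b.
  apply: clique_adj (blocks_cliques B' blockB') (in_B' y yc) (in_B' b bc) _.
  by apply: contraNneq yB => ->.
have nsyB := clique_add_nonsep cliqB uB bB ub yB (etrans (esym y u) euy) eyb.
move/forallP/(_ (y |: B))/implyP: B_max.
by rewrite properUr ?sub1set // subUset sub1set yV BV nsyB => /(_ isT).
Qed.

Lemma pendant_block_closed (V B : {set T}) v :
  (forall B', block e V B' -> is_clique e B') ->
  pendant_block e V B -> v \in B -> cut_vertex e V v ->
  forall u y, u \in B :\ v -> y \in V -> e u y -> y \in B.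
Proof.
move=> blocks_cliques /andP [blockB /cards1P [a cuts_B]] vB vcut u y /setD1P [uv uB].
have cut_a x : x \in B -> cut_vertex e V x -> x = a.
  by move=> xB xcut; apply/set1P; rewrite -cuts_B inE xB xcut.
have noncut : ~~ cut_vertex e V u.
  by apply: contra uv => ucut; rewrite (cut_a u uB ucut) (cut_a v vB vcut).
exact: noncut_nbr_in_block blocks_cliques blockB uB vB uv noncut.
Qed.

End Blocks.

Section PendantClique.
Variables (T : finType) (e : rel T).
Hypothesis esym : symmetric e.
Variables (V B : {set T}) (v : T).
Hypotheses (BV : B \subset V) (cliqB : is_clique e B) (vB : v \in B).
(* [B] is attached to the rest of the graph at [v] only ... *)
Hypothesis closedW : forall u y, u \in B :\ v -> y \in V -> e u y -> y \in B.
(* ... and has at least three vertices, so [W] below has two. *)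
Hypothesis B_ge3 : 2 < #|B|.

Local Notation W := (B :\ v).
Local Notation V1 := (V :\: (B :\ v)).

Lemma nbr_W u w : u \in V -> w \in W -> e u w -> u \in B.
Proof. by move=> uV wW euw; apply: closedW wW uV _; rewrite esym. Qed.

Lemma WV : W \subset V. Proof. exact: subset_trans (subD1set B v) BV. Qed.

Lemma V1V : V1 \subset V. Proof. exact: subsetDl. Qed.

Lemma vV1 : v \in V1. Proof. by rewrite !inE eqxx (subsetP BV). Qed.

Lemma cardW : #|W| = #|B|.-1. Proof. by rewrite (cardsD1 v B) vB. Qed.

Lemma force_from_B (Y : {set T}) u w :
  u \in Y -> u \in B -> (forall y, y \in V -> y \notin Y -> e u y -> y = w) ->
  B :\ w \subset Y.
Proof.
move=> uY uB only_w; apply/subsetP=> x /setD1P [xw xB].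
have [-> //|xu] := eqVneq x u; apply/negPn/negP=> xY.
by move: xw; rewrite (only_w x (subsetP BV x xB) xY (clique_adj cliqB uB xB _)) ?eqxx // eq_sym.
Qed.

(* Lower bound.  A forcing process on [V] projects to one on [V1]: keep the
   blue vertices of [V1], and declare [v] blue as soon as all of [W] is. *)
Definition project (Y : {set T}) : {set T} :=
  (Y :&: V1) :|: (if W \subset Y then [set v] else set0).

Lemma project_V : project V = V1.
Proof. by rewrite /project WV (setIidPr V1V); apply/setUidPl; rewrite sub1set vV1. Qed.

Lemma project_sub (Y : {set T}) : project Y \subset V1.
Proof. by rewrite /project subUset subsetIr; case: ifP; rewrite ?sub1set ?vV1 ?sub0set. Qed.

Lemma project_card (Y : {set T}) : #|project Y| <= #|Y :&: V1| + (W \subset Y).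
Proof. by rewrite /project; case: ifP => _; rewrite (leq_trans (leq_card_setU _ _)) ?cards1 ?cards0. Qed.

Lemma project_blue_v (Y : {set T}) : v \in Y -> project Y = Y :&: V1.
Proof.
move=> vY; rewrite /project; case: ifP => _; last by rewrite setU0.
by apply/setUidPl; rewrite sub1set in_setI vY vV1.
Qed.

Lemma project_add (Y : {set T}) w : w \in V1 -> project (w |: Y) = w |: project Y.
Proof.
move=> wV1; have /setDP [_ wW] := wV1; rewrite /project.
have -> : (W \subset w |: Y) = (W \subset Y).
  apply/idP/idP => [/subsetP WwY|/subset_trans -> //]; last exact: subsetUr.
  apply/subsetP=> x xW; move: (WwY x xW) => /setU1P [xw|//].
  by move: xW; rewrite xw (negPf wW).
apply/setP=> x; rewrite in_setU1 !in_setU in_setI in_setU1.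
by case: (x =P w) => [->|_]; rewrite ?orTb ?wV1 // orFb in_setI.
Qed.

Lemma project_force (Y Y' : {set T}) : Y \subset V -> force e V Y Y' ->
  Y' \subset V /\ connect (force e V1) (project Y) (project Y').
Proof.
move=> YV /forceE [u [w [uY uV wV wY [euw only_w ->]]]].
split; first by rewrite subUset sub1set wV YV.
have BwY := force_from_B uY _ only_w.
have [wW|wW] := boolP (w \in W).
  (* [w] is forced from inside [B], so [v] is already blue: nothing changes *)
  have vY : v \in Y.
    apply: (subsetP (BwY (nbr_W uV wW euw))).
    by rewrite !inE vB andbT eq_sym; case/setD1P: wW.
  have wV1 : w \notin V1 by rewrite inE wW.
  rewrite !project_blue_v ?setU1r //; suff -> : (w |: Y) :&: V1 = Y :&: V1.
    exact: connect0.
  by apply/setP=> x; rewrite !in_setI in_setU1; case: (x =P w) => [->|]; rewrite ?(negPf wV1) ?andbF.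
have wV1 : w \in V1 by rewrite inE wW wV.
rewrite project_add //; have [wP|wP] := boolP (w \in project Y).
  by rewrite (setUidPr _) ?sub1set //; apply: connect0.
(* otherwise [u] lies outside [W]: a vertex of [W] can only force [v], and
   then all of [W] is blue, i.e. [v] is blue in the projection *)
have uW : u \notin W.
  apply: contra wP => uW; have /setD1P [uv uB] := uW.
  have wv : w = v by apply/eqP; move: wW; rewrite !inE (closedW uW wV euw) andbT negbK.
  have WY : W \subset Y by rewrite -wv; exact: BwY uB.
  by rewrite /project WY wv in_setU set11 orbT.
have uV1 : u \in V1 by rewrite inE uW uV.
apply: connect1; apply: (forceP (u := u)) => //.
  by rewrite /project in_setU in_setI uY uV1.
move=> y yV1 yP euy; apply: only_w => //; first by case/setDP: yV1.
by apply: contra yP => yY; rewrite /project in_setU in_setI yY yV1.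
Qed.

Lemma Z_lower : Z e V1 + #|B| - 2 <= Z e V.
Proof.
have [X [<- zfX]] := Z_witness e V.
have W_white := clique_white_le1 cliqB (subD1set B v) WV nbr_W zfX.
have /andP [XV connX] := zfX.
have zf_proj : zero_forcing e V1 (project X).
  rewrite /zero_forcing project_sub -[X in connect _ _ X]project_V.
  exact: connect_transport connX XV project_force.
have X_split : #|X :&: V1| + #|X :&: W| = #|X|.
  suff <- : X :\: W = X :&: V1 by rewrite addnC cardsID.
  apply/setP=> x; rewrite !inE.
  by case xX: (x \in X); rewrite ?andbF //= (subsetP XV).
have W_split := cardsID X W; rewrite setIC cardW in W_split.
have := leq_trans (Z_le zf_proj) (project_card X).
case: (boolP (W \subset X)) => [WX|_] /=; last by lia.
have : #|W :\: X| = 0 by apply/eqP; rewrite cards_eq0 setD_eq0.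
lia.
Qed.

(* Upper bound.  Fix [w0 \in W].  A forcing process on [V1] lifts to one on
   [V]: the vertices of [W :\ w0] are blue from the start, and once [v] is
   blue any other vertex of [W] forces [w0]. *)
Section Lift.
Variable w0 : T.
Hypothesis w0W : w0 \in W.

Definition lift (Y : {set T}) : {set T} :=
  Y :|: [set x in W | (x != w0) || (v \in Y)].

Lemma lift_V1 : lift V1 = V.
Proof.
apply/setP=> x; rewrite /lift in_setU in_set vV1 orbT andbT.
case xW: (x \in W); first by rewrite orbT (subsetP WV).
by rewrite orbF in_setD xW.
Qed.

Lemma lift_sub (Y : {set T}) : Y \subset V1 -> lift Y \subset V.
Proof.
move=> YV1; rewrite /lift subUset (subset_trans YV1 V1V) /=.
by apply/subsetP=> x; rewrite in_set => /andP [/(subsetP WV)].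
Qed.

Lemma W_lift (Y : {set T}) : W :\ w0 \subset lift Y.
Proof. by apply/subsetP=> x /setD1P [xw xW]; rewrite in_setU in_set xW xw orbT. Qed.

Lemma lift_blue_v (Y : {set T}) : v \in Y -> lift Y = Y :|: W.
Proof.
by move=> vY; rewrite /lift vY; congr (_ :|: _); apply/setP=> x; rewrite in_set orbT andbT.
Qed.

Lemma lift_setUW (Y : {set T}) : lift Y :|: W = Y :|: W.
Proof.
rewrite /lift -setUA; congr (_ :|: _); apply/setUidPr.
by apply/subsetP=> x; rewrite in_set => /andP [].
Qed.

(* With [v] and [W :\ w0] blue, any [w1 \in W :\ w0] forces [w0]: its
   neighbours all lie in the clique [B]. *)
Lemma force_w0 (Y : {set T}) :
  Y \subset V -> v \in Y -> W :\ w0 \subset Y -> connect (force e V) Y (Y :|: W).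
Proof.
move=> YV vY WY; rewrite -(setD1K w0W) setUCA (setUidPl WY).
have [w0Y|w0Y] := boolP (w0 \in Y).
  by rewrite (setUidPr _) ?sub1set //; apply: connect0.
have [w1 w1W] : exists w1, w1 \in W :\ w0.
  apply/set0Pn; rewrite -card_gt0; have := cardsD1 w0 W; rewrite w0W cardW.
  by have := B_ge3; lia.
have /setD1P [w10 w1W'] := w1W; have /setD1P [_ w1B] := w1W'.
have /setD1P [_ w0B] := w0W.
apply: connect1; apply: (forceP (u := w1)).
- exact: (subsetP WY).
- exact: (subsetP BV).
- exact: (subsetP BV).
- exact: w0Y.
- exact: clique_adj cliqB w1B w0B w10.
move=> y yV yY ew1y; have yB := closedW w1W' yV ew1y.
have yv : y != v by apply: (contraNneq _ yY) => ->.
apply/eqP; apply: contraNT yY => yw0; apply: (subsetP WY).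
by rewrite !inE yw0 yv yB.
Qed.

(* A force [u -> w] in the graph on [V1] is also a force in the graph on [V]
   after lifting: a white neighbour of [u] in [W] would force [u = v], but
   then all of [W] is blue in the lift. *)
Lemma lift_force1 (Y : {set T}) u w :
  u \in Y -> u \in V1 -> w \in V1 -> w \notin Y -> e u w ->
  (forall y, y \in V1 -> y \notin Y -> e u y -> y = w) ->
  force e V (lift Y) (w |: lift Y).
Proof.
move=> uY /setDP [uV uW] /setDP [wV wW] wY euw only_w.
apply: (forceP (u := u)) => //; first by rewrite in_setU uY.
  by rewrite in_setU negb_or wY in_set (negPf wW).
move=> y yV yL euy; have [yW|yW] := boolP (y \in W).
  have uv : u = v.
    by apply/eqP; move: uW; rewrite !inE (nbr_W uV yW euy) andbT negbK.
  by move: yL; rewrite in_setU in_set yW -uv uY !orbT.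
apply: only_w => //; first by rewrite in_setD yW yV.
by apply: contra yL => yY; rewrite in_setU yY.
Qed.

Lemma lift_force (Y Y' : {set T}) : Y \subset V1 -> force e V1 Y Y' ->
  Y' \subset V1 /\ connect (force e V) (lift Y) (lift Y').
Proof.
move=> YV1 /forceE [u [w [uY uV1 wV1 wY [euw only_w ->]]]].
split; first by rewrite subUset sub1set wV1 YV1.
have step := connect1 (lift_force1 uY uV1 wV1 wY euw only_w).
have [wv|wv] := eqVneq w v.
  (* [v] turns blue, and then [w0] is forced as well *)
  subst w; rewrite (lift_blue_v (setU11 v Y)) -setUA -lift_setUW setUA.
  apply: connect_trans step (force_w0 _ _ _).
  - by rewrite subUset sub1set (subsetP V1V) // lift_sub.
  - exact: setU11.
  - exact: subset_trans (W_lift Y) (subsetUr _ _).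
suff -> : lift (w |: Y) = w |: lift Y by [].
by rewrite /lift in_setU1 (eq_sym v) (negPf wv) setUA.
Qed.

Lemma lift_start (X1 : {set T}) : X1 \subset V1 ->
  connect (force e V) (X1 :|: (W :\ w0)) (lift X1).
Proof.
move=> X1V1; have [vX1|vX1] := boolP (v \in X1); last first.
  rewrite /lift (negPf vX1); suff -> : [set x in W | (x != w0) || false] = W :\ w0.
    exact: connect0.
  by apply/setP=> x; rewrite in_set orbF andbC -in_setD1.
have -> : lift X1 = (X1 :|: (W :\ w0)) :|: W.
  by rewrite lift_blue_v // -setUA (setUidPr (subD1set W w0)).
apply: force_w0; last exact: subsetUr.
- by rewrite subUset (subset_trans X1V1 V1V) (subset_trans (subD1set W w0) WV).
- by rewrite in_setU vX1.
Qed.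

End Lift.

Lemma Z_upper : Z e V <= Z e V1 + #|B| - 2.
Proof.
have [w0 w0W] : exists w0, w0 \in W by apply/set0Pn; rewrite -card_gt0 cardW; lia.
have [X1 [<- /andP [X1V1 connX1]]] := Z_witness e V1.
have X_sub : X1 :|: (W :\ w0) \subset V.
  by rewrite subUset (subset_trans X1V1 V1V) (subset_trans (subD1set W w0) WV).
have zfX : zero_forcing e V (X1 :|: (W :\ w0)).
  rewrite /zero_forcing X_sub -[X in connect _ _ X](lift_V1 w0) /=.
  apply: connect_trans (lift_start w0W X1V1) _.
  exact: connect_transport connX1 X1V1 (lift_force w0W).
have := leq_trans (Z_le zfX) (leq_card_setU _ _).
have := cardsD1 w0 W; rewrite w0W cardW /=; have := B_ge3; lia.
Qed.

Lemma Z_vertex_sum_clique : Z e V = Z e V1 + #|B| - 2.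
Proof. by apply/eqP; rewrite eqn_leq Z_upper Z_lower. Qed.

End PendantClique.

Theorem corollary2p5 (T : finType) (e : rel T) (V : {set T})
    (v : T) (B : {set T}) (m : nat) :
  symmetric e -> irreflexive e ->
  clique_tree e V ->
  (forall B' : {set T}, block e V B' -> 3 <= #|B'|) ->
  cut_vertex e V v ->
  pendant_block e V B -> v \in B ->
  #|B| = m -> 3 <= m ->
  let V1 := V :\: (B :\ v) in
  Z e V = Z e V1 + Z e B - 1 /\ Z e V = Z e V1 + m - 2.
Proof.
move=> esym eirr /andP [_ /forallP blocks_cliques] _ vcut pendB vB cardB m_ge3 V1.
have {}blocks_cliques B' : block e V B' -> is_clique e B'.
  exact/implyP/blocks_cliques.
have blockB : block e V B by case/andP: pendB.
have cliqB := blocks_cliques B blockB.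
have BV : B \subset V by case/and3P: blockB.
have closedW := pendant_block_closed esym eirr blocks_cliques pendB vB vcut.
have ZB : Z e B = m.-1 by rewrite -cardB Z_clique // cardB; lia.
have ZV : Z e V = Z e V1 + m - 2.
  by rewrite -cardB (Z_vertex_sum_clique esym BV cliqB vB closedW) // cardB.
by rewrite ZB ZV; split => //; lia.
Qed.
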